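(* For every integer $n\ge 4$, $\mathrm{wdim}_3(K_n\times K_n)=2n$.
   Context: $K_n\times K_n$ is the direct product of two complete graphs on $n$ vertices: vertex set $[n]\times[n]$ with $[n]=\{1,\dots,n\}$, and $(i,j)$ adjacent to $(i',j')$ iff $i\ne i'$ and $j\ne j'$. For a connected graph $G$ with distance $d_G$, vertices $x,y,z$ and $S\subseteq V(G)$, let $\Delta_z(x,y)=|d_G(x,z)-d_G(y,z)|$ and $\Delta_S(x,y)=\sum_{z\in S}\Delta_z(x,y)$. A set $S$ is a weak $k$-resolving set if $\Delta_S(x,y)\ge k$ for all distinct $x,y\in V(G)$, and $\mathrm{wdim}_k(G)$ is the minimum cardinality of a weak $k$-resolving set of $G$. *)

From mathcomp Require Import all_boot.
Set Implicit Arguments. Unset Strict Implicit. Unset Printing Implicit Defensive.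

Section Graph.
Variable T : finType.
Variable e : rel T.

Fixpoint ball (k : nat) (x : T) : {set T} :=
  if k is k'.+1 then
    ball k' x :|: [set y | [exists z in ball k' x, e z y]]
  else [set x].

(* shortest-path distance: least k with y within k steps of x
   (equals #|T| only if y is unreachable, which cannot happen in a
   connected graph) *)
Definition gdist (x y : T) : nat :=
  find (fun k => y \in ball k x) (iota 0 #|T|).

Definition absdiff (a b : nat) : nat := maxn a b - minn a b.

Definition Delta (z x y : T) : nat := absdiff (gdist x z) (gdist y z).

Definition DeltaS (S : {set T}) (x y : T) : nat := \sum_(z in S) Delta z x y.

Definition weak_resolving (k : nat) (S : {set T}) : bool :=
  [forall x, forall y, (x != y) ==> (k <= DeltaS S x y)].

(* minimum cardinality of a weak k-resolving set (#|T|.+1 if none exists) *)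
Definition wdim (k : nat) : nat :=
  \big[minn/#|T|.+1]_(S : {set T} | weak_resolving k S) #|S|.
End Graph.

(* direct product K_n x K_n on vertex set [n] x [n] *)
Definition KnKn_adj (n : nat) : rel ('I_n * 'I_n) :=
  fun u v => (u.1 != v.1) && (u.2 != v.2).
Arguments KnKn_adj n : clear implicits.

(* In K_n x K_n with n >= 3, two distinct vertices are at distance 1 when they
   differ in both coordinates and at distance 2 otherwise.  Writing r(i), c(j)
   for the number of points of S in row i and column j, two vertices (a,b),
   (a,d) of a common row are resolved by [Delta_S = [(a,b) in S] + [(a,d) in S]
   + c(b) + c(d)], and two vertices (a,b), (c,d) in general position by
   [Delta_S = r(a) + r(c) + c(b) + c(d) - [(a,b) in S] - [(c,d) in S]
   - 2[(a,d) in S] - 2[(c,b) in S]].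

   Lower bound: if S is weakly 3-resolving, any two columns carry at least 3
   points of S (otherwise some row meets neither, and its two vertices in these
   columns are resolved by at most 2), and likewise any two rows.  If moreover
   |S| < 2n, one row and one column carry a single point and all other lines
   exactly two.  Two points of S in general position, one in that row and one
   in that column, then span a rectangle whose two other corners are resolved
   by at most 6 - 4 = 2.

   Upper bound: the diagonal together with the graph of i |-> i + 1 (mod n) has
   two points on every line and contains no rectangle, so every pair is resolved
   by at least 3. *)

From HB Require Import structures.
From mathcomp Require Import all_boot zify.
Set Implicit Arguments. Unset Strict Implicit. Unset Printing Implicit Defensive.

HB.instance Definition _ := SemiGroup.isComLaw.Build nat minn minnA minnC.

Section GraphFacts.
Variables (T : finType) (e : rel T).

Lemma mem_ball0 x y : (y \in ball e 0 x) = (y == x).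
Proof. by rewrite inE. Qed.

Lemma mem_ball1 x y : (y \in ball e 1 x) = (y == x) || e x y.
Proof.
rewrite !inE; congr (_ || _); apply/existsP/idP => [[z /andP[]]|exy].
  by rewrite inE => /eqP->.
by exists x; rewrite inE eqxx.
Qed.

Lemma gdist_ball2 x y : 2 < #|T| -> y \in ball e 2 x ->
  gdist e x y = if y == x then 0 else if e x y then 1 else 2.
Proof.
move=> T3 y2; rewrite /gdist -(subnKC T3) iotaD /= y2 mem_ball1 mem_ball0.
by case: (y == x); case: (e x y).
Qed.

Lemma weak_resolvingP k S :
  reflect (forall x y, x != y -> k <= DeltaS e S x y) (weak_resolving e k S).
Proof.
apply: (iffP forallP) => [wS x y | wS x].
  by move: (wS x) => /forallP/(_ y)/implyP.
by apply/forallP => y; apply/implyP; apply: wS.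
Qed.

Lemma wdim_card k S : weak_resolving e k S ->
  (forall S', weak_resolving e k S' -> #|S| <= #|S'|) -> wdim e k = #|S|.
Proof.
move=> wS minS; apply/eqP; rewrite eqn_leq; apply/andP; split.
  by rewrite /wdim (big_rem_AC _ _ _ _ (mem_index_enum S)) wS geq_minl.
rewrite /wdim; elim/big_ind: _ => [|m1 m2|S' /minS] //.
- by rewrite ltnW // ltnS max_card.
- by rewrite leq_min => ->.
Qed.

End GraphFacts.

Lemma sum_indicator_eq (T : finType) (A : {pred T}) (w : T) :
  \sum_(z in A) (z == w : nat) = (w \in A).
Proof.
rewrite big_mkcond (bigD1 w) //= eqxx big1 ?addn0 => [|z /negbTE zw].
  by case: (w \in A).
by rewrite zw; case: (z \in A).
Qed.

Section RowsAndColumns.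
Variables (I J : finType) (S : {set I * J}).

Definition row_count (i : I) : nat := #|[set j | (i, j) \in S]|.
Definition col_count (j : J) : nat := #|[set i | (i, j) \in S]|.

Definition rectangle_free : Prop :=
  forall a c b d, a != c -> b != d ->
    (a, b) \in S -> (a, d) \in S -> (c, b) \in S -> (c, d) \notin S.

Lemma row_count_sum i : row_count i = \sum_j ((i, j) \in S : nat).
Proof. by rewrite /row_count -sum1dep_card big_mkcond. Qed.

Lemma col_count_sum j : col_count j = \sum_i ((i, j) \in S : nat).
Proof. by rewrite /col_count -sum1dep_card big_mkcond. Qed.

Lemma sum_in_pairs (F : I * J -> nat) :
  \sum_(z in S) F z = \sum_i \sum_j (if (i, j) \in S then F (i, j) else 0).
Proof. by rewrite pair_bigA big_mkcond; apply: eq_bigr => -[i j]. Qed.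

Lemma sum_fst_eq i : \sum_(z in S) (z.1 == i : nat) = row_count i.
Proof.
rewrite sum_in_pairs (bigD1 i) //= [X in _ + X]big1 => [|i' /negbTE i'i].
  by rewrite addn0 row_count_sum; apply: eq_bigr => j _; rewrite eqxx; case: ifP.
by apply: big1 => j _; rewrite i'i; case: ifP.
Qed.

Lemma sum_snd_eq j : \sum_(z in S) (z.2 == j : nat) = col_count j.
Proof.
rewrite sum_in_pairs exchange_big (bigD1 j) //= [X in _ + X]big1 => [|j' /negbTE j'j].
  by rewrite addn0 col_count_sum; apply: eq_bigr => i _; rewrite eqxx; case: ifP.
by apply: big1 => i _; rewrite j'j; case: ifP.
Qed.

Lemma card_row_counts : #|S| = \sum_i row_count i.
Proof.
rewrite -sum1_card sum_in_pairs; apply: eq_bigr => i _.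
by rewrite row_count_sum; apply: eq_bigr => j _; case: ifP.
Qed.

Lemma card_col_counts : #|S| = \sum_j col_count j.
Proof.
rewrite -sum1_card sum_in_pairs exchange_big; apply: eq_bigr => j _.
by rewrite col_count_sum; apply: eq_bigr => i _; case: ifP.
Qed.

Lemma row_count_gt0 i : 0 < row_count i -> exists j, (i, j) \in S.
Proof. by case/card_gt0P => j; rewrite inE; exists j. Qed.

Lemma col_count_gt0 j : 0 < col_count j -> exists i, (i, j) \in S.
Proof. by case/card_gt0P => i; rewrite inE; exists i. Qed.

Lemma row_count_ge2 i j j' :
  j != j' -> (i, j) \in S -> (i, j') \in S -> 1 < row_count i.
Proof.
move=> jj' ij ij'; have sub : [set j; j'] \subset [set k | (i, k) \in S].
  by apply/subsetP => k; rewrite !inE => /orP[]/eqP->.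
by rewrite (leq_trans _ (subset_leq_card sub)) // cards2 jj'.
Qed.

Lemma exists_row_avoiding j j' :
  col_count j + col_count j' < #|I| -> exists i, ((i, j) \notin S) && ((i, j') \notin S).
Proof.
rewrite /col_count; set A := [set i | (i, j) \in S]; set B := [set i | (i, j') \in S].
move=> small; have /card_gt0P[i] : 0 < #|~: (A :|: B)|.
  rewrite -(ltn_add2l #|A :|: B|) addn0 cardsC.
  exact: leq_ltn_trans (leq_card_setU A B).1 small.
by rewrite !inE negb_or; exists i.
Qed.

Lemma exists_col_avoiding i i' :
  row_count i + row_count i' < #|J| -> exists j, ((i, j) \notin S) && ((i', j) \notin S).
Proof.
rewrite /row_count; set A := [set j | (i, j) \in S]; set B := [set j | (i', j) \in S].
move=> small; have /card_gt0P[j] : 0 < #|~: (A :|: B)|.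
  rewrite -(ltn_add2l #|A :|: B|) addn0 cardsC.
  exact: leq_ltn_trans (leq_card_setU A B).1 small.
by rewrite !inE negb_or; exists j.
Qed.

End RowsAndColumns.

Lemma pairwise_ge3_sum_lt (I : finType) (f : I -> nat) :
  2 < #|I| -> (forall i j, i != j -> 3 <= f i + f j) -> \sum_i f i < 2 * #|I| ->
  exists i0, f i0 = 1 /\ forall i, i != i0 -> f i = 2.
Proof.
move=> I3 f3 small.
have [i0 fi0] : exists i0, f i0 <= 1.
  case: (pickP (fun i => f i <= 1)) => [i0 fi0 | f2]; first by exists i0.
  have : \sum_(i : I) 2 <= \sum_i f i by apply: leq_sum => i _; rewrite ltnNge f2.
  have -> : \sum_(i : I) 2 = 2 * #|I| by rewrite sum_nat_const mulnC.
  lia.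
have other_ge i : i != i0 -> 3 - f i0 <= f i by move=> /f3; lia.
have sum_other := leqif_sum (fun i (ne : i != i0) => leqif_eq (other_ge i ne)).
rewrite (sum_nat_const (predC1 i0)) cardC1 in sum_other.
rewrite (bigD1 i0) //= in small.
have fi0_1 : f i0 = 1.
  (* [set] merges the syntactically different forms of [#|I|] for [lia]. *)
  by case: (f i0) fi0 sum_other.1 small I3 => [|[|//]] //; set N := #|I|; lia.
have /forallP other_eq : [forall (i | i != i0), 3 - f i0 == f i].
  by rewrite -sum_other.2 eqn_leq sum_other.1 fi0_1 /=; lia.
by exists i0; split=> // i /(implyP (other_eq i)); rewrite fi0_1 => /eqP<-.
Qed.

Lemma ordS_iter_neq n (k : nat) (i : 'I_n) : 0 < k < n -> iter k (@ordS n) i != i.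
Proof.
have val_iter : val (iter k (@ordS n) i) = (i + k) %% n.
  elim: k => [|k IH] /=; first by rewrite addn0 modn_small.
  by rewrite IH -addn1 modnDml -addnA addn1.
move=> /andP[k0 kn]; rewrite -val_eqE /= val_iter -{2}(modn_small (ltn_ord i)).
by rewrite -{2}[val i]addn0 eqn_modDl mod0n modn_small // -lt0n.
Qed.

Section Band.
Variables (I : finType) (f : I -> I).
Hypotheses (f_inj : injective f) (f_neq : forall i, f i != i)
  (f2_neq : forall i, f (f i) != i).

Definition band : {set I * I} := [set z | (z.2 == z.1) || (z.2 == f z.1)].

Lemma band_row i : [set j | (i, j) \in band] = [set i; f i].
Proof. by apply/setP => j; rewrite !inE. Qed.

Lemma band_col j : [set i | (i, j) \in band] = [set j; invF f_inj j].
Proof.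
apply/setP => i; rewrite !inE /= (eq_sym i).
by congr (_ || _); apply/eqP/eqP => [->|->]; rewrite ?invF_f ?f_invF.
Qed.

Lemma row_count_band i : row_count band i = 2.
Proof. by rewrite /row_count band_row cards2 eq_sym f_neq. Qed.

Lemma col_count_band j : col_count band j = 2.
Proof.
rewrite /col_count band_col cards2; case: eqP => // ej.
by have := f_neq j; rewrite {1}ej f_invF eqxx.
Qed.

Lemma card_band : #|band| = 2 * #|I|.
Proof.
by rewrite card_row_counts (eq_bigr _ (fun i _ => row_count_band i)) sum_nat_const mulnC.
Qed.

Lemma band_row_pair i j j' : j != j' -> (i, j) \in band -> (i, j') \in band ->
  [set i; f i] = [set j; j'].
Proof.
move=> jj' ij ij'; apply/eqP; rewrite eq_sym eqEcard !cards2 jj' eq_sym f_neq leqnn andbT.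
by rewrite -band_row; apply/subsetP => k; rewrite in_set2 => /orP[]/eqP->; rewrite in_set.
Qed.

Lemma band_rectangle_free : rectangle_free band.
Proof.
move=> a c b d ac bd ab ad cb; apply/negP => cd.
have rows_eq : [set a; f a] = [set c; f c].
  by rewrite (band_row_pair bd ab ad) (band_row_pair bd cb cd).
have : a \in [set c; f c] by rewrite -rows_eq set21.
have : c \in [set a; f a] by rewrite rows_eq set21.
rewrite !inE (negbTE ac) eq_sym (negbTE ac) /= => /eqP-> /eqP ea.
by have := f2_neq a; rewrite -ea eqxx.
Qed.

End Band.

Section KnKn.
Variable n : nat.
Hypothesis n_gt2 : 2 < n.
Local Notation V := ('I_n * 'I_n)%type.
Local Notation adj := (KnKn_adj n).

Lemma exists_ord_neq2 (a b : 'I_n) : exists c : 'I_n, (c != a) && (c != b).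
Proof.
have : 0 < #|~: [set a; b]|.
  by have := cardsC [set a; b]; rewrite cards2 card_ord; lia.
by case/card_gt0P => c; rewrite !inE negb_or; exists c.
Qed.

Lemma mem_ball2_KnKn (x y : V) : y \in ball adj 2 x.
Proof.
have [c1 /andP[c1x c1y]] := exists_ord_neq2 x.1 y.1.
have [c2 /andP[c2x c2y]] := exists_ord_neq2 x.2 y.2.
rewrite [ball _ 2 _]/= !inE; apply/orP; right; apply/existsP; exists (c1, c2).
by rewrite mem_ball1 /KnKn_adj /= (eq_sym x.1) (eq_sym x.2) c1x c2x c1y c2y orbT.
Qed.

Lemma gdist_KnKn (x y : V) :
  gdist adj x y = if y == x then 0 else if adj x y then 1 else 2.
Proof. by rewrite gdist_ball2 ?mem_ball2_KnKn // card_prod card_ord; nia. Qed.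

Ltac case_eqs := repeat match goal with
  | H : is_true (?u != ?u) |- _ => by rewrite eqxx in H
  | |- context [?u == ?v] => case: (eqVneq u v) => [?|?]; subst
  end.

Lemma Delta_row (a b d : 'I_n) (z : V) : b != d ->
  Delta adj z (a, b) (a, d) = (z == (a, b)) + (z == (a, d)) + (z.2 == b) + (z.2 == d).
Proof.
case: z => p q; rewrite /Delta !gdist_KnKn /absdiff /KnKn_adj /= !xpair_eqE.
by case_eqs; rewrite ?eqxx.
Qed.

Lemma Delta_col (a c b : 'I_n) (z : V) : a != c ->
  Delta adj z (a, b) (c, b) = (z == (a, b)) + (z == (c, b)) + (z.1 == a) + (z.1 == c).
Proof.
case: z => p q; rewrite /Delta !gdist_KnKn /absdiff /KnKn_adj /= !xpair_eqE.
by case_eqs; rewrite ?eqxx.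
Qed.

Lemma Delta_offline (a b c d : 'I_n) (z : V) : a != c -> b != d ->
  Delta adj z (a, b) (c, d) + (z == (a, b)) + (z == (c, d))
    + 2 * (z == (a, d)) + 2 * (z == (c, b))
  = (z.1 == a) + (z.1 == c) + (z.2 == b) + (z.2 == d).
Proof.
case: z => p q; rewrite /Delta !gdist_KnKn /absdiff /KnKn_adj /= !xpair_eqE.
by case_eqs; rewrite ?eqxx.
Qed.

Lemma DeltaS_row (S : {set V}) (a b d : 'I_n) : b != d ->
  DeltaS adj S (a, b) (a, d)
  = ((a, b) \in S) + ((a, d) \in S) + col_count S b + col_count S d.
Proof.
move=> bd; rewrite /DeltaS (eq_bigr _ (fun z _ => Delta_row a z bd)) !big_split /=.
by rewrite !sum_indicator_eq !sum_snd_eq.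
Qed.

Lemma DeltaS_col (S : {set V}) (a c b : 'I_n) : a != c ->
  DeltaS adj S (a, b) (c, b)
  = ((a, b) \in S) + ((c, b) \in S) + row_count S a + row_count S c.
Proof.
move=> ac; rewrite /DeltaS (eq_bigr _ (fun z _ => Delta_col b z ac)) !big_split /=.
by rewrite !sum_indicator_eq !sum_fst_eq.
Qed.

Lemma DeltaS_offline (S : {set V}) (a b c d : 'I_n) : a != c -> b != d ->
  DeltaS adj S (a, b) (c, d) + ((a, b) \in S) + ((c, d) \in S)
    + 2 * ((a, d) \in S) + 2 * ((c, b) \in S)
  = row_count S a + row_count S c + col_count S b + col_count S d.
Proof.
move=> ac bd; rewrite -!sum_indicator_eq !big_distrr -!big_split /=.
rewrite (eq_bigr _ (fun z _ => Delta_offline z ac bd)) !big_split /=.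
by rewrite !sum_fst_eq !sum_snd_eq.
Qed.

Lemma col_count_pair_ge3 (S : {set V}) j j' : weak_resolving adj 3 S -> j != j' ->
  3 <= col_count S j + col_count S j'.
Proof.
move=> /weak_resolvingP wS jj'; rewrite leqNgt; apply/negP => small.
have [i /andP[ij ij']] : exists i, ((i, j) \notin S) && ((i, j') \notin S).
  by apply: exists_row_avoiding; rewrite card_ord; lia.
have /wS : (i, j) != (i, j') by rewrite xpair_eqE eqxx.
by rewrite DeltaS_row // (negbTE ij) (negbTE ij'); lia.
Qed.

Lemma row_count_pair_ge3 (S : {set V}) i i' : weak_resolving adj 3 S -> i != i' ->
  3 <= row_count S i + row_count S i'.
Proof.
move=> /weak_resolvingP wS ii'; rewrite leqNgt; apply/negP => small.
have [j /andP[ij i'j]] : exists j, ((i, j) \notin S) && ((i', j) \notin S).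
  by apply: exists_col_avoiding; rewrite card_ord; lia.
have /wS : (i, j) != (i', j) by rewrite xpair_eqE eqxx andbT.
by rewrite DeltaS_col // (negbTE ij) (negbTE i'j); lia.
Qed.

Lemma offline_count_sum_ge7 (S : {set V}) a b c d : weak_resolving adj 3 S ->
  a != c -> b != d -> (a, b) \in S -> (c, d) \in S ->
  7 <= row_count S a + row_count S c + col_count S b + col_count S d.
Proof.
move=> /weak_resolvingP wS ac bd ab cd.
have db : d != b by rewrite eq_sym.
have /wS : (a, d) != (c, b) by rewrite xpair_eqE negb_and ac.
have := DeltaS_offline S ac db; rewrite ab cd.
(* [set] merges the two elaborations of this [DeltaS] term, which [lia] would
   otherwise treat as distinct atoms. *)
by set D := DeltaS _ _ _ _; lia.
Qed.

Lemma weak_resolving3_card_ge (S : {set V}) : weak_resolving adj 3 S -> 2 * n <= #|S|.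
Proof.
move=> wS; rewrite leqNgt; apply/negP => small.
have [j0 [c_j0 c_other]] :
    exists j0, col_count S j0 = 1 /\ forall j, j != j0 -> col_count S j = 2.
  apply: pairwise_ge3_sum_lt; rewrite ?card_ord -?card_col_counts //.
  by move=> j j'; apply: col_count_pair_ge3.
have [i0 [r_i0 r_other]] :
    exists i0, row_count S i0 = 1 /\ forall i, i != i0 -> row_count S i = 2.
  apply: pairwise_ge3_sum_lt; rewrite ?card_ord -?card_row_counts //.
  by move=> i i'; apply: row_count_pair_ge3.
case: (boolP ((i0, j0) \in S)) => [in00 | out00].
  have [j /andP[jj0 _]] := exists_ord_neq2 j0 j0.
  have [i ij] : exists i, (i, j) \in S by apply: col_count_gt0; rewrite c_other.
  have ii0 : i != i0.
    apply/eqP => ei; move: ij; rewrite ei => /(row_count_ge2 jj0)/(_ in00).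
    by rewrite r_i0.
  have := offline_count_sum_ge7 wS ii0 jj0 ij in00.
  by rewrite r_i0 c_j0 r_other // c_other.
have [j1 i0j1] : exists j1, (i0, j1) \in S by apply: row_count_gt0; rewrite r_i0.
have [i1 i1j0] : exists i1, (i1, j0) \in S by apply: col_count_gt0; rewrite c_j0.
have j0j1 : j0 != j1 by apply: contraNneq out00 => ->.
have i1i0 : i1 != i0 by apply: contraNneq out00 => <-.
have := offline_count_sum_ge7 wS i1i0 j0j1 i1j0 i0j1.
by rewrite r_i0 c_j0 r_other // c_other // eq_sym.
Qed.

Lemma weak_resolving_two_per_line (S : {set V}) :
  (forall i, row_count S i = 2) -> (forall j, col_count S j = 2) -> rectangle_free S ->
  weak_resolving adj 3 S.
Proof.
move=> r2 c2 rfree; apply/weak_resolvingP => -[a b] [c d] xy.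
case: (eqVneq a c) xy => [<- | ac] xy.
  have bd : b != d by rewrite xpair_eqE eqxx in xy.
  by rewrite DeltaS_row // !c2; lia.
have [<- | bd] := eqVneq b d; first by rewrite DeltaS_col // !r2; lia.
have := DeltaS_offline S ac bd; have := rfree a c b d ac bd; rewrite !r2 !c2.
by case: ((a, b) \in S); case: ((a, d) \in S); case: ((c, b) \in S);
  case: ((c, d) \in S) => /=; lia.
Qed.

End KnKn.

Theorem mainTheorem4 (n : nat) : 4 <= n -> wdim (KnKn_adj n) 3 = (2 * n)%N.
Proof.
move=> n_ge4; have n_gt2 : 2 < n by apply: ltnW.
have ordS_neq (i : 'I_n) : ordS i != i by apply: (@ordS_iter_neq n 1 i); lia.
have ordS2_neq (i : 'I_n) : ordS (ordS i) != i by apply: (@ordS_iter_neq n 2 i); lia.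
have band_wr : weak_resolving (KnKn_adj n) 3 (band (@ordS n)).
  apply: weak_resolving_two_per_line => //.
  - exact: row_count_band.
  - exact: col_count_band (@ordS_inj n) ordS_neq.
  - exact: band_rectangle_free.
have card_b : #|band (@ordS n)| = 2 * n by rewrite (card_band ordS_neq) card_ord.
rewrite (wdim_card band_wr) card_b // => S; exact: weak_resolving3_card_ge.
Qed.
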